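(* Let $\Gamma$ be a connected finite simple graph on $N\ge3$ vertices with minimum degree $d=2$ and $\varepsilon=\frac12$. Then there exist two adjacent vertices $u\sim v$ with $\deg u=\deg v=2$.
   Context: For a finite simple graph $\Gamma=(V,E)$ without isolated vertices, $\deg v$ is the number of neighbours of $v$ and $\mathcal N(v)=\{w\in V: w\sim v\}$. The normalized Laplacian acts on functions $f:V\to\mathbb R$ by $\Delta f(v)=f(v)-\frac{1}{\deg v}\sum_{w\sim v}f(w)$; its eigenvalues are $0=\lambda_1\le\lambda_2\le\dots\le\lambda_N$, and $\varepsilon:=\min_i|1-\lambda_i|$. $d$ denotes the minimum vertex degree. *)

From HB Require Import structures.
From mathcomp Require Import all_boot all_order all_algebra.
From mathcomp Require Import reals.
Set Implicit Arguments. Unset Strict Implicit. Unset Printing Implicit Defensive.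
Import Order.TTheory GRing.Theory Num.Theory.
Local Open Scope ring_scope.

Definition simple_graph (n : nat) (e : rel 'I_n) : Prop :=
  symmetric e /\ irreflexive e.

Definition deg (n : nat) (e : rel 'I_n) (v : 'I_n) : nat := #|[set w | e v w]|.

Definition connected_graph (n : nat) (e : rel 'I_n) : Prop :=
  forall u v : 'I_n, connect e u v.

Definition min_degree_eq (n : nat) (e : rel 'I_n) (k : nat) : Prop :=
  (forall v, k <= deg e v)%N /\ exists v, deg e v = k.

(* Matrix of the normalized Laplacian: (Delta f)(v) = f v - 1/deg v sum_{w~v} f w *)
Definition norm_laplacian (R : realType) (n : nat) (e : rel 'I_n) : 'M[R]_n :=
  \matrix_(i, j) ((i == j)%:R - (e i j)%:R / (deg e i)%:R).

Definition is_epsilon (R : realType) (n : nat) (e : rel 'I_n) (eps : R) : Prop :=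
  (forall l : R, eigenvalue (norm_laplacian R e) l -> eps <= `|1 - l|) /\
  (exists2 l : R, eigenvalue (norm_laplacian R e) l & `|1 - l| = eps).

From HB Require Import structures.
From mathcomp Require Import all_boot all_order all_algebra.
From mathcomp Require Import reals.
From mathcomp Require Import spectral sesquilinear.
From mathcomp.real_closed Require Import complex.
From mathcomp.algebra_tactics Require Import ring lra.
From mathcomp Require Import zify.
Set Implicit Arguments. Unset Strict Implicit. Unset Printing Implicit Defensive.
Import Order.TTheory GRing.Theory Num.Theory.
Local Open Scope ring_scope.
Local Open Scope sesquilinear_scope.

(* The matrix [S = D^-1/2 A D^-1/2] is real symmetric and every eigenvalue [r]
   of [S] gives the eigenvalue [1 - r] of the normalized Laplacian.  If
   [eps = 1/2] then [r^2 >= 1/4] on the spectrum of [S], so by the spectral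
   theorem every [f] satisfies
     1/4 * sum_v deg v * f v ^ 2 <= sum_v (sum_(w ~ v) f w) ^ 2 / deg v.
   Suppose no two degree-2 vertices are adjacent and let [v] have degree 2,
   with neighbours [a], [b] of degrees [p], [q >= 3].  Testing [f = d_v - d_w]
   excludes a second degree-2 vertex [w] next to [a] or [b]; then
   [f = d_v - t d_x], with [x] another neighbour of [a], forces
   [1/p + 1/q > 1/2], whereas [f = al d_a + be d_b] with [al * be <= 0] forces
   [1/p + 1/q <= 1/2]. *)

Section SpectralBound.
Variable C : numClosedFieldType.

Lemma spectral_diag_eigenvalue n (A : 'M[C]_n) i :
  A \is normalmx -> eigenvalue A (spectral_diag A 0 i).
Proof.
move=> /orthomx_spectralP A_spectral; set P := spectralmx A in A_spectral *.
set s := spectral_diag A in A_spectral *.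
have P_unitary : P \is unitarymx by apply: spectral_unitarymx.
apply/eigenvalueP; exists (row i P).
  rewrite [in LHS]A_spectral !mulmxA -row_mul mulmxV ?unitarymx_unit // row1.
  suff -> : (delta_mx 0 i : 'rV_n) *m diag_mx s = s 0 i *: delta_mx 0 i.
    by rewrite -scalemxAl -rowE.
  apply/matrixP => k j; rewrite ord1 mul_mx_diag !mxE eqxx /=.
  by case: eqP => [->|_]; rewrite ?mulr1 ?mulr0 ?mul1r ?mul0r.
apply/negP => /eqP row0.
have /(congr1 (row i)) := unitarymxP P_unitary.
rewrite row_mul row0 mul0mx row1 => /matrixP/(_ 0 i).
by rewrite !mxE !eqxx /= mulr1n => /eqP; rewrite eq_sym oner_eq0.
Qed.

Lemma normalmx_qform_ge n (A : 'M[C]_n) (c : C) :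
  A \is normalmx -> (forall i, c <= spectral_diag A 0 i * (spectral_diag A 0 i)^*) ->
  forall g : 'rV_n, c * (g *m g^t*) 0 0 <= (g *m A *m (g *m A)^t*) 0 0.
Proof.
move=> /orthomx_spectralP A_spectral s_ge g; set P := spectralmx A in A_spectral.
set s := spectral_diag A in A_spectral s_ge.
have P_unitary : P \is unitarymx by apply: spectral_unitarymx.
have PtP : P^t* *m P = 1%:M by rewrite -invmx_unitary // mulVmx ?unitarymx_unit.
set h := g *m P^t*.
have -> : g *m A *m (g *m A)^t* = (h *m diag_mx s) *m (h *m diag_mx s)^t*.
  rewrite A_spectral invmx_unitary // !mulmxA /h !trmx_mul !map_mxM !mulmxA.
  by rewrite -[_ *m P *m P^t*]mulmxA (unitarymxP P_unitary) mulmx1.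
have -> : g *m g^t* = h *m h^t*.
  by rewrite /h trmx_mul map_mxM trmxCK mulmxA -[_ *m P^t* *m P]mulmxA PtP mulmx1.
rewrite !mxE mulr_sumr; apply: ler_sum => j _; rewrite mul_mx_diag !mxE.
rewrite rmorphM mulrACA [leRHS]mulrC.
by rewrite ler_wpM2r ?mul_conjC_ge0 ?s_ge.
Qed.

End SpectralBound.

Section RealSymmetric.
Variable R : rcfType.
Local Notation toC := (real_complex R).

Lemma eigenvalue_map_real_complex n (S : 'M[R]_n) (r : R) :
  eigenvalue (map_mx toC S) (toC r) -> eigenvalue S r.
Proof. by rewrite !eigenvalue_root_char -map_char_poly fmorph_root. Qed.

Lemma conj_real_complex (x : R) : (toC x)^* = toC x.
Proof. exact: conjc_real. Qed.

Lemma map_real_complex_trmxC m k (M : 'M[R]_(m, k)) :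
  (map_mx toC M)^t* = map_mx toC M^T.
Proof. by apply/matrixP => i j; rewrite !mxE conj_real_complex. Qed.

Lemma symmetric_qform_ge n (S : 'M[R]_n) (c : R) : S^T = S ->
  (forall r, eigenvalue S r -> c <= r ^+ 2) ->
  forall g : 'rV_n, c * (g *m g^T) 0 0 <= (g *m S *m (g *m S)^T) 0 0.
Proof.
move=> S_sym eig_ge g; set Sc := map_mx toC S.
have Sc_herm : Sc \is hermsymmx.
  apply: realsym_hermsym.
    by apply/is_hermitianmxP; rewrite expr0 scale1r map_mx_id // map_trmx S_sym.
  by apply/mxOverP => i j; rewrite mxE; apply/complex_realP; exists (S i j).
have s_real := hermitian_spectral_diag_real Sc_herm.
have s_ge i : toC c <= spectral_diag Sc 0 i * (spectral_diag Sc 0 i)^*.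
  have := spectral_diag_eigenvalue i (hermitian_normalmx Sc_herm).
  rewrite -(RRe_real (mxOverP s_real 0 i)) => /eigenvalue_map_real_complex/eig_ge.
  by rewrite conj_real_complex -rmorphM lecR expr2.
rewrite -lecR rmorphM /= -[g *m S *m _]/((g *m S) *m (g *m S)^T).
have qform_map (x : 'rV_n) :
    toC ((x *m x^T) 0 0) = (map_mx toC x *m (map_mx toC x)^t*) 0 0.
  by rewrite map_real_complex_trmxC -map_mxM [in RHS]mxE.
rewrite !qform_map map_mxM.
exact: normalmx_qform_ge (hermitian_normalmx Sc_herm) s_ge _.
Qed.

End RealSymmetric.

Definition sym_norm_adjacency (R : realType) n (e : rel 'I_n) : 'M[R]_n :=
  \matrix_(i, j) ((e i j)%:R / (Num.sqrt (deg e i)%:R * Num.sqrt (deg e j)%:R)).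

Definition averaging_norm_ge (R : realType) n (e : rel 'I_n) (c : R) :=
  forall f : 'I_n -> R, c * \sum_i (deg e i)%:R * f i ^+ 2 <=
    \sum_i (\sum_j (e i j)%:R * f j) ^+ 2 / (deg e i)%:R.

Section NormalizedAdjacency.
Variables (R : realType) (n : nat) (e : rel 'I_n).
Hypothesis e_sym : symmetric e.
Hypothesis deg_gt0 : forall v, (0 < deg e v)%N.

Local Notation sq i := (Num.sqrt ((deg e i)%:R : R)).
Local Notation S := (sym_norm_adjacency R e).

Let sq_neq0 i : sq i != 0.
Proof. by rewrite gt_eqF // sqrtr_gt0 ltr0n. Qed.

Let sqr_sq i : sq i ^+ 2 = (deg e i)%:R.
Proof. by rewrite sqr_sqrtr ?ler0n. Qed.

Lemma trmx_sym_norm_adjacency : S^T = S.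
Proof. by apply/matrixP => i j; rewrite !mxE [e j i]e_sym [sq j * _]mulrC. Qed.

Lemma eigenvalue_norm_laplacian r :
  eigenvalue S r -> eigenvalue (norm_laplacian R e) (1 - r).
Proof.
move=> /eigenvalueP [w w_eig w_neq0]; apply/eigenvalueP.
exists (\row_j (w 0 j * sq j)); last first.
  apply: contra w_neq0 => /eqP w0; apply/eqP/rowP => j.
  have /eqP := congr1 (fun M : 'rV[R]_n => M 0 j) w0; rewrite !mxE.
  by rewrite mulf_eq0 (negbTE (sq_neq0 j)) orbF => /eqP.
apply/rowP => j; rewrite !mxE.
have := congr1 (fun M : 'rV[R]_n => M 0 j) w_eig; rewrite !mxE => w_eig_j.
rewrite (eq_bigr (fun i => w 0 i * sq i * (i == j)%:R - sq j * (w 0 i * S i j))).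
  rewrite sumrB -mulr_sumr w_eig_j (bigD1 j) //= eqxx mulr1 big1 ?addr0.
    by ring.
  by move=> i /negbTE ->; rewrite mulr0.
move=> i _; rewrite !mxE -[X in _ - _ / X]sqr_sq.
by case: (e i j); rewrite /= ?mulr1n; field; rewrite !sq_neq0.
Qed.

Lemma averaging_norm_ge_eigenvalue (c : R) : 0 <= c ->
  (forall l, eigenvalue (norm_laplacian R e) l -> c <= `|1 - l|) ->
  averaging_norm_ge e (c ^+ 2).
Proof.
move=> c_ge0 eig_ge f.
have eigS_ge r : eigenvalue S r -> c ^+ 2 <= r ^+ 2.
  move=> /eigenvalue_norm_laplacian/eig_ge; rewrite opprB addrC subrK => c_le.
  have := normr_ge0 r; rewrite -[r ^+ 2]real_normK ?num_real; nra.
have := symmetric_qform_ge trmx_sym_norm_adjacency eigS_ge (\row_j (sq j * f j)).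
congr (_ * _ <= _); rewrite !mxE.
  by apply: eq_bigr => i _; rewrite !mxE -[(deg e i)%:R in RHS]sqr_sq; ring.
apply: eq_bigr => i _; rewrite !mxE.
have -> : \sum_j (\row_k (sq k * f k)) 0 j * S j i = (\sum_j (e i j)%:R * f j) / sq i.
  rewrite mulr_suml; apply: eq_bigr => j _; rewrite !mxE [e j i]e_sym.
  by field; rewrite !sq_neq0.
by rewrite -[(deg e i)%:R in RHS]sqr_sq; field; rewrite sq_neq0.
Qed.

End NormalizedAdjacency.

Lemma sum_mul_eq_natr (R : pzSemiRingType) (T : finType) (F : T -> R) x :
  \sum_j F j * (j == x)%:R = F x.
Proof.
by rewrite (bigD1 x) //= eqxx mulr1 big1 ?addr0 // => j /negbTE ->; rewrite mulr0.
Qed.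

Lemma sum_natr_pred (R : pzSemiRingType) (T : finType) (P : pred T) :
  \sum_i (P i)%:R = #|[set i | P i]|%:R :> R.
Proof.
rewrite -sum1_card natr_sum [RHS]big_mkcond /=.
by apply: eq_bigr => i _; rewrite inE; case: (P i).
Qed.

Lemma sum_natr_predD1 (R : pzRingType) (T : finType) (P : pred T) v :
  \sum_i (P i && (i != v))%:R = \sum_i (P i)%:R - (P v)%:R :> R.
Proof.
rewrite (bigD1 v) //= [X in _ = X - _](bigD1 v) //= eqxx andbF add0r addrAC subrr add0r.
by apply: eq_bigr => i ->; rewrite andbT.
Qed.

Lemma lef_natV (R : numFieldType) (k d : nat) : (0 < k)%N -> (k <= d)%N ->
  (d%:R : R)^-1 <= (k%:R)^-1.
Proof.
by move=> k_gt0 kd; rewrite lef_pV2 ?ler_nat // posrE ltr0n //; apply: leq_trans kd.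
Qed.

Lemma deg2_neighbours n (e : rel 'I_n) v : deg e v = 2%N ->
  exists a b, a != b /\ forall i, e v i = (i == a) || (i == b).
Proof.
move=> /eqP/cards2P [a [b [ab Nv]]]; exists a, b; split=> // i.
by rewrite -in_set2 -Nv inE.
Qed.

Lemma exists_neighbour_other n (e : rel 'I_n) a v : (2 <= deg e a)%N -> exists x, e a x && (x != v).
Proof.
move=> a2; have : (0 < #|[set w | e a w] :\ v|)%N.
  have := cardsD1 v [set w | e a w]; move: a2; rewrite /deg; case: (v \in _) => /=; lia.
by case/card_gt0P => x; rewrite !inE => /andP[xv ax]; exists x; rewrite ax.
Qed.

Section TwoPointTest.
Variables (R : realType) (n : nat) (e : rel 'I_n).

Lemma sum_deg (x : 'I_n) : \sum_i (e x i)%:R = (deg e x)%:R :> R.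
Proof. exact: sum_natr_pred. Qed.

Lemma averaging_norm_ge_two_point (c : R) x y (a b : R) :
  averaging_norm_ge e c -> x != y ->
  c * (a ^+ 2 * (deg e x)%:R + b ^+ 2 * (deg e y)%:R) <=
  \sum_i (a * (e i x)%:R + b * (e i y)%:R) ^+ 2 / (deg e i)%:R.
Proof.
move=> avg xy; have := avg (fun j => a * (j == x)%:R + b * (j == y)%:R).
congr (_ * _ <= _).
  rewrite (eq_bigr (fun i => a ^+ 2 * (deg e i)%:R * (i == x)%:R +
                             b ^+ 2 * (deg e i)%:R * (i == y)%:R)).
    by rewrite big_split /= !(sum_mul_eq_natr (fun i => _ * (deg e i)%:R)).
  move=> i _; have [->|ix] := eqVneq i x; first by rewrite (negbTE xy) /=; ring.
  by have [->|iy] := eqVneq i y; rewrite /= ?(negbTE ix) /=; ring.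
apply: eq_bigr => i _; congr (_ ^+ 2 / _).
rewrite (eq_bigr (fun j => a * (e i j)%:R * (j == x)%:R + b * (e i j)%:R * (j == y)%:R)).
  by rewrite big_split /= !(sum_mul_eq_natr (fun j => _ * (e i j)%:R)).
by move=> j _; ring.
Qed.

End TwoPointTest.

Section Degree2Vertices.
Variables (R : realType) (n : nat) (e : rel 'I_n).
Hypothesis e_sym : symmetric e.
Hypothesis deg_ge2 : forall v, (2 <= deg e v)%N.
Hypothesis avg : averaging_norm_ge e (4^-1 : R).

Let deg_gt0 v : (0 < deg e v)%N.
Proof. exact: leq_trans (deg_ge2 v). Qed.

Let invdeg_gt0 v : 0 < (deg e v)%:R^-1 :> R.
Proof. by rewrite invr_gt0 ltr0n. Qed.

Let invdeg_le3 v : (3 <= deg e v)%N -> (deg e v)%:R^-1 <= 3^-1 :> R.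
Proof. exact: lef_natV. Qed.

Lemma deg2_no_common_neighbour v w x :
  v != w -> deg e v = 2%N -> deg e w = 2%N ->
  (forall i, e v i -> 3 <= deg e i)%N -> (forall i, e w i -> 3 <= deg e i)%N ->
  e v x -> e w x -> False.
Proof.
move=> vw v2 w2 Nv3 Nw3 evx ewx.
have := averaging_norm_ge_two_point 1 (-1) avg vw; rewrite v2 w2.
have : \sum_i ((1 : R) * (e i v)%:R + -1 * (e i w)%:R) ^+ 2 / (deg e i)%:R <=
       \sum_i (3^-1 * (e v i && (i != x))%:R + 3^-1 * (e w i && (i != x))%:R).
  apply: ler_sum => i _; rewrite [e i v]e_sym [e i w]e_sym.
  have := invdeg_gt0 i; have [->|ix] := eqVneq i x.
    by rewrite evx ewx !andbF /=; nra.
  rewrite !andbT; case Evi: (e v i); case Ewi: (e w i); rewrite /= ?mulr1n ?mulr0n.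
  - by have := invdeg_le3 (Nv3 i Evi); nra.
  - by have := invdeg_le3 (Nv3 i Evi); nra.
  - by have := invdeg_le3 (Nw3 i Ewi); nra.
  - by nra.
rewrite big_split /= -!mulr_sumr !sum_natr_predD1 !sum_deg v2 w2 evx ewx /= mulr1n.
lra.
Qed.

Lemma deg2_inv_deg_neighbours_gt v a b :
  deg e v = 2%N -> a != b -> (forall i, e v i = (i == a) || (i == b)) ->
  (3 <= deg e a)%N -> 2^-1 < (deg e a)%:R^-1 + (deg e b)%:R^-1 :> R.
Proof.
move=> v2 ab Nv a3; rewrite ltNge; apply/negP => inv_le.
have eva : e v a by rewrite Nv eqxx.
have [x /andP[eax xv]] := exists_neighbour_other v (deg_ge2 a).
set p := deg e a; set q := deg e b; set dx := deg e x.
(* [t * dx = 1/p]: the gain [2t/p] at [a] then outweighs the cost of order [t^2 dx]. *)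
set t : R := (p%:R * dx%:R)^-1.
have t_gt0 : 0 < t by rewrite invr_gt0 mulr_gt0 ?ltr0n ?deg_gt0.
have t_le : t <= 6^-1.
  rewrite /t -natrM; apply: (@lef_natV R 6) => //.
  exact: (leq_mul a3 (deg_ge2 x)).
have tdx : t * dx%:R = p%:R^-1.
  by rewrite /t invfM -mulrA mulVf ?mulr1 // pnatr_eq0 -lt0n deg_gt0.
have vx : v != x by rewrite eq_sym.
have := averaging_norm_ge_two_point 1 (- t) avg vx.
rewrite v2.
have : \sum_i ((1 : R) * (e i v)%:R + - t * (e i x)%:R) ^+ 2 / (deg e i)%:R <=
       \sum_i ((1 - t) ^+ 2 / p%:R * (i == a)%:R +
               (q%:R^-1 * (i == b)%:R + t ^+ 2 / 2 * (e x i)%:R)).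
  apply: ler_sum => i _; rewrite [e i v]e_sym [e i x]e_sym.
  have := invdeg_gt0 i; have [->|ia] := eqVneq i a.
    by rewrite -/p eva [e x a]e_sym eax (negbTE ab) /= ?mulr1n ?mulr0n; nra.
  rewrite Nv (negbTE ia) /=; have [->|ib] := eqVneq i b.
    have : (1 - t) ^+ 2 <= 1 by nra.
    by rewrite -/q; case: (e x b); rewrite /= ?mulr1n ?mulr0n; nra.
  have := @lef_natV R 2 _ isT (deg_ge2 i).
  by case: (e x i); rewrite /= ?mulr1n ?mulr0n; nra.
rewrite !big_split /= !sum_mul_eq_natr -!mulr_sumr sum_deg -/dx.
move: inv_le; rewrite -/p -/q => inv_le.
have tdx2 : t ^+ 2 * dx%:R = t / p%:R by rewrite expr2 -mulrA tdx.
have tp_gt0 : 0 < t / p%:R by apply: mulr_gt0 => //; apply: invdeg_gt0.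
have t2p_le : t ^+ 2 / p%:R <= t / p%:R / 6 by nra.
nra.
Qed.

Section IsolatedDegree2.
Variables (v a b : 'I_n).
Hypotheses (v2 : deg e v = 2%N) (ab : a != b).
Hypothesis Nv : forall i, e v i = (i == a) || (i == b).
Hypothesis Na3 : forall i, e a i -> i != v -> (3 <= deg e i)%N.
Hypothesis Nb3 : forall i, e b i -> i != v -> (3 <= deg e i)%N.

Local Notation p := (deg e a).
Local Notation q := (deg e b).

Lemma deg2_neighbours_two_point (al be : R) : al * be <= 0 ->
  4^-1 * (al ^+ 2 * p%:R + be ^+ 2 * q%:R) <=
  (al + be) ^+ 2 / 2 + al ^+ 2 / 3 * (p%:R - 1) + be ^+ 2 / 3 * (q%:R - 1).
Proof.
move=> albe; have eav : e a v by rewrite e_sym Nv eqxx.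
have ebv : e b v by rewrite e_sym Nv eqxx orbT.
apply: le_trans (averaging_norm_ge_two_point al be avg ab) _.
have : \sum_i (al * (e i a)%:R + be * (e i b)%:R) ^+ 2 / (deg e i)%:R <=
       \sum_i ((al + be) ^+ 2 / 2 * (i == v)%:R +
               (al ^+ 2 / 3 * (e a i && (i != v))%:R + be ^+ 2 / 3 * (e b i && (i != v))%:R)).
  apply: ler_sum => i _; rewrite [e i a]e_sym [e i b]e_sym.
  have := invdeg_gt0 i; have [->|iv] := eqVneq i v.
    by rewrite eav ebv v2 !andbF /= ?mulr1n ?mulr0n; nra.
  rewrite !andbT; case Eai: (e a i); case Ebi: (e b i); rewrite /= ?mulr1n ?mulr0n.
  - by have := invdeg_le3 (Na3 Eai iv); nra.
  - by have := invdeg_le3 (Na3 Eai iv); nra.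
  - by have := invdeg_le3 (Nb3 Ebi iv); nra.
  - by nra.
move/le_trans; apply.
rewrite !big_split /= sum_mul_eq_natr -!mulr_sumr !sum_natr_predD1 !sum_deg eav ebv /=.
by rewrite addrA.
Qed.

Lemma deg2_inv_deg_neighbours_le : (3 <= p)%N -> (3 <= q)%N ->
  p%:R^-1 + q%:R^-1 <= 2^-1 :> R.
Proof.
move=> p3 q3; rewrite leNgt; apply/negP => inv_gt.
have p_neq0 : p%:R != 0 :> R by rewrite pnatr_eq0 -lt0n.
have q_neq0 : q%:R != 0 :> R by rewrite pnatr_eq0 -lt0n.
have small_pq : (p * q < 2 * (p + q))%N.
  rewrite -(ltr_nat R) natrM natrM natrD -subr_gt0.
  have -> : 2%:R * (p%:R + q%:R) - p%:R * q%:R =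
            (p%:R^-1 + q%:R^-1 - 2^-1) * (2 * p%:R * q%:R) :> R.
    by field; rewrite p_neq0 q_neq0.
  by rewrite mulr_gt0 ?subr_gt0 // !mulr_gt0 // ltr0n.
have : (p + q <= 7)%N \/ (p = 3 /\ q = 5)%N \/ (p = 5 /\ q = 3)%N by nia.
case=> [pq7 | [[p_eq q_eq] | [p_eq q_eq]]].
- have := deg2_neighbours_two_point (al := 1) (be := -1).
  have : p%:R + q%:R <= 7 :> R by rewrite -natrD (ler_nat _ _ 7).
  by lra.
- by have := deg2_neighbours_two_point (al := 7) (be := -6); rewrite p_eq q_eq; lra.
- by have := deg2_neighbours_two_point (al := 6) (be := -7); rewrite p_eq q_eq; lra.
Qed.

End IsolatedDegree2.

Lemma exists_adjacent_deg2 : (exists v, deg e v = 2%N) ->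
  exists u w, [/\ e u w, deg e u = 2%N & deg e w = 2%N].
Proof.
move=> [v v2].
case: (boolP [exists u, exists w, [&& e u w, deg e u == 2%N & deg e w == 2%N]]).
  by case/existsP=> u /existsP[w /and3P[euw /eqP u2 /eqP w2]]; exists u, w.
move=> /existsPn no_pair; exfalso.
have N3 u : deg e u = 2%N -> forall i, e u i -> (3 <= deg e i)%N.
  move=> u2 i eui; rewrite ltn_neqAle deg_ge2 andbT eq_sym.
  by apply/eqP=> i2; have /existsPn/(_ i) := no_pair u; rewrite eui u2 i2 eqxx.
have [a [b [ab Nv]]] := deg2_neighbours v2.
have a3 : (3 <= deg e a)%N by apply: N3 v2 _ _; rewrite Nv eqxx.
have b3 : (3 <= deg e b)%N by apply: N3 v2 _ _; rewrite Nv eqxx orbT.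
case: (boolP [exists w, [&& deg e w == 2%N, w != v & e w a || e w b]]).
  case/existsP=> w /and3P[/eqP w2 wv ewab]; rewrite eq_sym in wv.
  have [x ewx evx] : exists2 x, e w x & e v x.
    by case/orP: ewab => ?; [exists a | exists b]; rewrite ?Nv ?eqxx ?orbT.
  exact: (deg2_no_common_neighbour wv v2 w2 (N3 v v2) (N3 w w2) evx ewx).
move=> /existsPn no_deg2_near.
have near3 i : e a i || e b i -> i != v -> (3 <= deg e i)%N.
  move=> eabi iv; rewrite ltn_neqAle deg_ge2 andbT eq_sym; apply/eqP=> i2.
  by have := no_deg2_near i; rewrite i2 eqxx iv [e i a]e_sym [e i b]e_sym eabi.
have Na3 i : e a i -> i != v -> (3 <= deg e i)%N by move=> eai; apply: near3; rewrite eai.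
have Nb3 i : e b i -> i != v -> (3 <= deg e i)%N by move=> ebi; apply: near3; rewrite ebi orbT.
have := deg2_inv_deg_neighbours_gt v2 ab Nv a3.
have := deg2_inv_deg_neighbours_le v2 ab Nv Na3 Nb3 a3 b3.
lra.
Qed.

End Degree2Vertices.

Theorem mainTheorem9 (R : realType) (n : nat) (e : rel 'I_n) :
  simple_graph e -> connected_graph e -> (3 <= n)%N ->
  min_degree_eq e 2 ->
  is_epsilon e (1 / 2 : R) ->
  exists u v : 'I_n, [/\ e u v, deg e u = 2%N & deg e v = 2%N].
Proof.
move=> [e_sym _] _ _ [deg_ge2 deg2] [eps_le _].
have deg_gt0 v : (0 < deg e v)%N by apply: leq_trans (deg_ge2 v).
have avg := averaging_norm_ge_eigenvalue e_sym deg_gt0 (c := 1 / 2) ltac:(lra) eps_le.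
rewrite expr_div_n expr1n -natrX mul1r in avg.
exact: exists_adjacent_deg2 e_sym deg_ge2 avg deg2.
Qed.
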